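(* Let $p,q$ be distinct primes and $n\geqslant1$. Then the width of $C_{p^nq}$ equals $n+1$.
   Context: For a finite group $G$, an arrow is a pair $(H,K)$ of subgroups with $H\leqslant K$; identity arrows are those with $H=K$. A $G$-transfer system is a set of arrows containing all identities and closed under composition ($(H,K),(K,L)\Rightarrow(H,L)$), conjugation ($(H,K)\Rightarrow(gHg^{-1},gKg^{-1})$) and restriction ($(H,K)$ and $L\leqslant K\Rightarrow(H\cap L,L)$). For a set $S$ of non-identity arrows, $\langle S\rangle$ is the smallest transfer system containing $S$. A minimal generating set of a transfer system $\mathsf{T}$ is a set $S\subseteq\mathsf{T}$ of non-identity arrows with $\langle S\rangle=\mathsf{T}$ and $\langle S\setminus\{s\}\rangle\neq\mathsf{T}$ for all $s\in S$; all such have the same cardinality $\mathfrak{m}(\mathsf{T})$. The width of $G$ is $\mathfrak{m}$ of the complete transfer system (consisting of all arrows). *)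

From mathcomp Require Import all_boot all_fingroup all_solvable.
Set Implicit Arguments. Unset Strict Implicit. Unset Printing Implicit Defensive.
Local Open Scope group_scope.

Section TransferSystems.
Variable gT : finGroupType.

Definition arrow_t := ({set gT} * {set gT})%type.

Definition arrowb (G : {set gT}) (a : arrow_t) : bool :=
  [&& group_set a.1, group_set a.2, a.1 \subset a.2 & a.2 \subset G].

Definition complete_ts (G : {set gT}) : {set arrow_t} := [set a | arrowb G a].

Definition is_transfer (G : {group gT}) (T : {set arrow_t}) : Prop :=
  [/\ (forall a, a \in T -> arrowb G a),
      (forall H : {group gT}, H \subset G -> ((H : {set gT}), (H : {set gT})) \in T),
      (forall H K L : {set gT}, (H, K) \in T -> (K, L) \in T -> (H, L) \in T),
      (forall (H K : {set gT}) g, g \in G -> (H, K) \in T -> (H :^ g, K :^ g) \in T)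
    & (forall (H K : {set gT}) (L : {group gT}),
          (H, K) \in T -> L \subset K -> (H :&: L, (L : {set gT})) \in T)].

Definition generates (G : {group gT}) (S T : {set arrow_t}) : Prop :=
  [/\ is_transfer G T, S \subset T &
      forall T', is_transfer G T' -> S \subset T' -> T \subset T'].

Definition min_gen_set (G : {group gT}) (S T : {set arrow_t}) : Prop :=
  [/\ S \subset T,
      (forall a, a \in S -> a.1 != a.2),
      generates G S T &
      forall s, s \in S -> ~ generates G (S :\ s) T].

End TransferSystems.

From mathcomp Require Import all_boot all_fingroup all_solvable.

Set Implicit Arguments. Unset Strict Implicit. Unset Printing Implicit Defensive.

(* As G is abelian, conjugation acts trivially, and a set S of arrows generates the complete
   transfer system iff every cover H < K in G (H maximal in K) is the restriction of some s in S
   to K, i.e. s.1 :&: K = H and K <= s.2: every arrow factors into covers, and conversely the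
   arrows that do not restrict onto a fixed cover form a transfer system. Minimal generating
   sets are therefore the minimal covering sets of non-identity arrows.
   In the cyclic group of order p^n q, naming subgroups by their orders, the n+1 covers
   p^k q < p^(k+1) q (k < n) and p^n < p^n q need pairwise distinct restricting arrows, since a
   subgroup containing the bottoms of two of them contains the top of one. Conversely an arrow
   restricting onto A < B restricts onto every cover H < K with H <= A, K <= B and K not in A,
   and every cover of G sits in this position below one of the n+1. So a minimal covering set
   consists of exactly one arrow for each of these covers. *)

Section Restriction.
Variable gT : finGroupType.
Implicit Types (s : arrow_t gT) (A B H K : {group gT}).

Definition restricts s (A B : {set gT}) : bool := (s.1 :&: B == A) && (B \subset s.2).

Lemma restricts_proper s A B :
  A \proper B -> restricts s A B -> (A \subset s.1) && ~~ (B \subset s.1).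
Proof.
move=> ltAB /andP[/eqP defA _]; rewrite -defA subsetIl /=.
by apply: contraTN ltAB => /setIidPr sBs; rewrite -defA sBs properxx.
Qed.

Lemma maximal_setI A B (X : {group gT}) :
  maximal A B -> A \subset X -> ~~ (B \subset X) -> X :&: B = A.
Proof.
move=> /maxgroupP[ltAB maxA] sAX nsBX.
have ltXB_B : (X :&: B)%G \proper B.
  by rewrite properEneq subsetIr andbT; apply: contraNneq nsBX => <-; apply: subsetIl.
by rewrite (maxA _ ltXB_B) // subsetI sAX (proper_sub ltAB).
Qed.

Lemma restricts_maximal s H K A B :
    maximal H K -> H \subset A -> K \subset B -> ~~ (K \subset A) ->
  restricts s A B -> restricts s H K.
Proof.
move=> maxH sHA sKB nsKA /andP[/eqP defA sBs].
rewrite /restricts (subset_trans sKB sBs) andbT.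
by rewrite -(maximal_setI maxH sHA nsKA) -defA -setIA (setIidPr sKB).
Qed.

End Restriction.

Section Covering.
Variables (gT : finGroupType) (G : {group gT}).
Implicit Types (S T : {set arrow_t gT}) (H K : {group gT}).

Definition covering S : bool :=
  [forall K : {group gT}, forall H : {group gT},
     (K \subset G) && maximal H K ==> [exists s in S, restricts s H K]].

Lemma coveringP S :
  reflect (forall H K, K \subset G -> maximal H K -> exists2 s, s \in S & restricts s H K)
          (covering S).
Proof.
apply: (iffP forallP) => [covS H K sKG maxH | covS K].
  by have /forallP/(_ H)/implyP/(_ (introT andP (conj sKG maxH)))/exists_inP := covS K.
apply/forallP=> H; apply/implyP=> /andP[sKG maxH].
by have [s Ss rs] := covS H K sKG maxH; apply/exists_inP; exists s.
Qed.

Lemma coveringS S S' : S \subset S' -> covering S -> covering S'.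
Proof.
move=> sSS' /coveringP covS; apply/coveringP=> H K sKG maxH.
by have [s Ss rs] := covS H K sKG maxH; exists s; first exact: subsetP sSS' s Ss.
Qed.

Lemma complete_tsP (a : arrow_t gT) :
  reflect (exists H K, [/\ a = (gval H, gval K), H \subset K & K \subset G])
          (a \in complete_ts G).
Proof.
case: a => a1 a2; rewrite inE /arrowb /=; apply: (iffP and4P).
  by case=> /isgroupP[H ->] /isgroupP[K ->] sHK sKG; exists H, K.
by case=> H [K [[-> ->] sHK sKG]]; rewrite !groupP.
Qed.

Lemma complete_ts_transfer : is_transfer G (complete_ts G).
Proof.
split.
- by move=> a; rewrite inE.
- by move=> H sHG; rewrite inE /arrowb /= groupP subxx.
- move=> H K L; rewrite !inE /arrowb /= => /and4P[-> _ sHK _] /and4P[_ -> sKL ->].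
  by rewrite (subset_trans sHK sKL).
- move=> H K g Gg; rewrite !inE /arrowb /= !group_setJ !conjSg => /and4P[-> -> -> sKG].
  by rewrite -(conjGid Gg) conjSg.
- move=> H K L; rewrite !inE /arrowb /= => /and4P[/isgroupP[H' ->] _ sHK sKG] sLK.
  by rewrite /arrowb /= groupP group_setI subsetIr (subset_trans sLK).
Qed.

Lemma covering_complete_sub S T :
  is_transfer G T -> S \subset T -> covering S -> complete_ts G \subset T.
Proof.
move=> [_ Tid Tcomp _ Tres] sST /coveringP covS; apply/subsetP=> a.
case/complete_tsP=> H [K [-> sHK sKG]].
elim: {K}_.+1 {-2}K (ltnSn #|K|) => // m IHm K leKm in sHK sKG *.
have [-> | [M maxM sHM]] := maximal_exists sHK; first exact: Tid.
have [s Ss /andP[/eqP defM sKs]] := covS M K sKG maxM.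
have ltMK := maxgroupp maxM.
apply: Tcomp (IHm M _ sHM (subset_trans (proper_sub ltMK) sKG)) _.
  exact: leq_trans (proper_card ltMK) _.
by rewrite -defM; apply: Tres sKs; rewrite -surjective_pairing; apply: (subsetP sST).
Qed.

Lemma covering_generates S :
  S \subset complete_ts G -> covering S -> generates G S (complete_ts G).
Proof.
move=> sST covS; split=> [||T transT sST']; [exact: complete_ts_transfer | by [] |].
exact: covering_complete_sub covS.
Qed.

Definition nontrivial_arrows : {set arrow_t gT} := [set a in complete_ts G | a.1 != a.2].

Definition nontrivial_covering S : bool := (S \subset nontrivial_arrows) && covering S.

Lemma nontrivial_arrows_sub : nontrivial_arrows \subset complete_ts G.
Proof. by apply/subsetP=> a /setIdP[]. Qed.

Section Counting.
Variables (I : finType) (A B : I -> {group gT}).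
Hypotheses (sBG : forall i, B i \subset G) (maxAB : forall i, maximal (A i) (B i)).
Hypothesis sepAB : forall i j (X : {group gT}),
  X \subset G -> A i \subset X -> A j \subset X -> ~~ (B i \subset X) -> ~~ (B j \subset X) ->
  i = j.
Hypothesis domAB : forall H K, K \subset G -> maximal H K ->
  exists i, [/\ H \subset A i, K \subset B i & ~~ (K \subset A i)].

Lemma card_minset_covering S : minset nontrivial_covering S -> #|S| = #|I|.
Proof.
case/minsetP=> /andP[ntS /coveringP covS] minS.
have /fin_all_exists[f fP] : forall i, exists s, (s \in S) && restricts s (A i) (B i).
  by move=> i; have [s Ss rs] := covS _ _ (sBG i) (maxAB i); exists s; rewrite Ss.
have f_inj : injective f.
  move=> i j eq_f; have /andP[Sfi rfi] := fP i; have /andP[_ rfj] := fP j.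
  rewrite -eq_f in rfj.
  have /andP[sAiX nsBiX] := restricts_proper (maxgroupp (maxAB i)) rfi.
  have /andP[sAjX nsBjX] := restricts_proper (maxgroupp (maxAB j)) rfj.
  have /setIdP[/complete_tsP[X [Y [eXY sXY sYG]]] _] := subsetP ntS _ Sfi.
  rewrite eXY /= in sAiX nsBiX sAjX nsBjX.
  exact: sepAB (subset_trans sXY sYG) sAiX sAjX nsBiX nsBjX.
have sfS : [set f i | i : I] \subset S.
  by apply/subsetP=> _ /imsetP[i _ ->]; case/andP: (fP i).
have covf : covering [set f i | i : I].
  apply/coveringP=> H K sKG maxH; have [i [sHA sKB nsKA]] := domAB sKG maxH.
  exists (f i); first exact: imset_f.
  by apply: restricts_maximal maxH sHA sKB nsKA _; case/andP: (fP i).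
rewrite -(minS _ _ sfS) ?card_imset //.
by rewrite /nontrivial_covering covf (subset_trans sfS).
Qed.

End Counting.

End Covering.

Section Abelian.
Variables (gT : finGroupType) (G : {group gT}).
Local Open Scope group_scope.
Hypothesis abG : abelian G.
Implicit Types (S : {set arrow_t gT}) (A B : {group gT}).

Lemma transfer_unrestricted A B :
  B \subset G -> maximal A B ->
  is_transfer G [set a in complete_ts G | ~~ restricts a A B].
Proof.
move=> sBG maxA; have ltAB := maxgroupp maxA.
have [Tarr Tid Tcomp _ Tres] := complete_ts_transfer G.
split.
- by move=> a /setIdP[/Tarr].
- move=> H sHG; rewrite inE Tid //=; apply: contraTN ltAB => /andP[/eqP <- /setIidPr->].
  by rewrite properxx.
- move=> H K L /setIdP[aHK rHK] /setIdP[aKL rKL].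
  rewrite inE (Tcomp _ K) //=; apply: contra rKL => /andP[/eqP defA sBL].
  case/complete_tsP: aHK => [H' [K' [[eH eK] sHK _]]]; subst H K.
  (* K' :&: B lies between A and B, hence is one of them. *)
  have [sBK | nsBK] := boolP (B \subset K').
    by rewrite /restricts defA eqxx sBK in rHK.
  rewrite /restricts sBL (maximal_setI maxA) ?eqxx // -defA.
  exact: subset_trans (subsetIl _ _) sHK.
- move=> H K g Gg /setIdP[aHK rHK].
  case/complete_tsP: (aHK) => [H' [K' [[eH eK] sHK sKG]]]; subst H K.
  have conjK (X : {group gT}) : X \subset G -> X :^ g = X.
    by move=> sXG; apply/normP; apply: subsetP (sub_abelian_norm abG sXG) g Gg.
  by rewrite !conjK //; [apply/setIdP | apply: subset_trans sHK sKG].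
- move=> H K L /setIdP[aHK rHK] sLK.
  rewrite inE (Tres _ K) //=; apply: contra rHK => /andP[/eqP defA sBL].
  by rewrite /restricts (subset_trans sBL sLK) -defA -setIA (setIidPr sBL) eqxx.
Qed.

Lemma generates_covering S : generates G S (complete_ts G) -> covering G S.
Proof.
case=> _ sST minT; apply/coveringP=> A B sBG maxA.
apply/exists_inP; apply: contraT => /exists_inPn unrS.
have sSunr : S \subset [set a in complete_ts G | ~~ restricts a A B].
  by apply/subsetP=> s Ss; rewrite inE (subsetP sST) // unrS.
have := subsetP (minT _ (transfer_unrestricted sBG maxA) sSunr) (gval A, gval B).
have sAB := proper_sub (maxgroupp maxA).
rewrite !inE /arrowb !groupP sAB sBG /restricts /= (setIidPl sAB) eqxx subxx.
by move/(_ isT).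
Qed.

Lemma min_gen_setP S :
  min_gen_set G S (complete_ts G) <-> minset (nontrivial_covering G) S.
Proof.
have ntT S' : S' \subset nontrivial_arrows G -> S' \subset complete_ts G.
  by move/subset_trans; apply; apply: nontrivial_arrows_sub.
split=> [[sST ntS genS minS] | /minsetP[/andP[ntS covS] minS]].
  have ntS' : S \subset nontrivial_arrows G.
    by apply/subsetP=> s Ss; rewrite inE (subsetP sST) ?ntS.
  apply/minsetP; split=> [|S' /andP[_ covS'] sS'S].
    by rewrite /nontrivial_covering ntS' generates_covering.
  apply/eqP; rewrite eqEsubset sS'S; apply/subsetP=> s Ss; apply: contraT => nS's.
  case: (minS s Ss); apply: covering_generates; first exact: subset_trans (subsetDl _ _) sST.
  apply: coveringS covS'; apply/subsetP=> x S'x; rewrite in_setD1 (subsetP sS'S) // andbT.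
  by apply: contraNneq nS's => <-.
split=> [||| s Ss /generates_covering covSs]; first exact: ntT.
- by move=> a /(subsetP ntS)/setIdP[].
- exact: covering_generates (ntT _ ntS) covS.
have ntSs : nontrivial_covering G (S :\ s).
  by rewrite /nontrivial_covering covSs andbT (subset_trans (subsetDl _ _)).
by have := minS _ ntSs (subsetDl _ _); move/setP/(_ s); rewrite !inE eqxx Ss.
Qed.

Lemma min_gen_set_exists : exists S, min_gen_set G S (complete_ts G).
Proof.
have [|S minS _] := @minset_exists _ (nontrivial_covering G) (nontrivial_arrows G).
  rewrite /nontrivial_covering subxx; apply/coveringP=> H K sKG maxH.
  have ltHK := maxgroupp maxH; exists (gval H, gval K); last first.
    by rewrite /restricts (setIidPl (proper_sub ltHK)) !eqxx subxx.
  rewrite !inE /arrowb !groupP (proper_sub ltHK) sKG /=.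
  by move: ltHK; rewrite properEneq => /andP[].
by exists S; apply/min_gen_setP.
Qed.

End Abelian.

Section PrimePowerTimesPrime.
Variables p q n : nat.
Hypotheses (p_pr : prime p) (q_pr : prime q) (p_neq_q : p != q).

Definition cover_bot (i : option 'I_n) : nat := if i is Some k then p ^ k * q else p ^ n.
Definition cover_top (i : option 'I_n) : nat := if i is Some k then p ^ k.+1 * q else p ^ n * q.

Let p_gt0 := prime_gt0 p_pr.
Let p_gt1 := prime_gt1 p_pr.
Let q_gt0 := prime_gt0 q_pr.

Lemma coprime_pexp_q m : coprime (p ^ m) q.
Proof. by rewrite coprimeXl // prime_coprime // dvdn_prime2. Qed.

Lemma cover_topE i : cover_top i = cover_bot i * (if i is Some _ then p else q).
Proof. by case: i => [k|] //=; rewrite mulnAC expnSr. Qed.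

Lemma cover_top_dvd i : cover_top i %| p ^ n * q.
Proof. by case: i => [k|] //=; rewrite dvdn_pmul2r // dvdn_Pexp2l. Qed.

Lemma cover_bot_dvd i : cover_bot i %| p ^ n * q.
Proof. by apply: dvdn_trans (cover_top_dvd i); rewrite cover_topE dvdn_mulr. Qed.

Lemma cover_bot_sep i j h :
    cover_bot i %| h -> cover_bot j %| h -> ~~ (cover_top i %| h) -> ~~ (cover_top j %| h) ->
  i = j.
Proof.
have top_dvd_bot (k l : 'I_n) : k < l -> cover_top (Some k) %| cover_bot (Some l).
  by move=> lt_kl; rewrite /= dvdn_pmul2r // dvdn_Pexp2l.
have top_None (k : 'I_n) : cover_bot (Some k) %| h -> cover_bot None %| h -> cover_top None %| h.
  move=> /= dv_k dv_n; rewrite Gauss_dvd ?coprime_pexp_q // dv_n.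
  exact: dvdn_trans (dvdn_mull _ (dvdnn q)) dv_k.
case: i j => [k|] [l|] si sj ti tj //.
- congr Some; case: (ltngtP k l) => [lt_kl | lt_lk | /val_inj //].
    by case/negP: ti; apply: dvdn_trans (top_dvd_bot _ _ lt_kl) sj.
  by case/negP: tj; apply: dvdn_trans (top_dvd_bot _ _ lt_lk) si.
- by case/negP: tj; apply: top_None si sj.
- by case/negP: ti; apply: top_None sj si.
Qed.

Lemma cover_dominates x r :
    prime r -> x * r %| p ^ n * q ->
  exists i, [/\ x %| cover_bot i, x * r %| cover_top i & ~~ (x * r %| cover_bot i)].
Proof.
move=> r_pr dv_xr; have := dvdn_trans (dvdn_mull x (dvdnn r)) dv_xr.
rewrite Euclid_dvdM // Euclid_dvdX // !dvdn_prime2 //.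
case/orP=> [/andP[/eqP def_r _] | /eqP def_r]; subst r.
  have /andP[x_gt0 _] : (0 < x) && (0 < p).
    by rewrite -muln_gt0 (dvdn_gt0 _ dv_xr) // muln_gt0 expn_gt0 p_gt0.
  have [m cop_pm def_x] := pfactor_coprime p_pr x_gt0; set k := logn p x in def_x.
  rewrite def_x -mulnA -expnSr in dv_xr *.
  have lt_kn : k < n.
    rewrite -(dvdn_Pexp2l _ _ p_gt1) -(Gauss_dvdl _ (coprime_pexp_q _)).
    exact: dvdn_trans (dvdn_mull _ (dvdnn _)) dv_xr.
  have dv_mq : m %| q.
    rewrite -(Gauss_dvdr _ (_ : coprime m (p ^ n))) ?coprimeXr 1?coprime_sym //.
    exact: dvdn_trans (dvdn_mulr _ (dvdnn _)) dv_xr.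
  exists (Some (Ordinal lt_kn)); rewrite /= ![m * _]mulnC !dvdn_pmul2l ?expn_gt0 ?p_gt0 //.
  split=> //; apply/negP => /(dvdn_trans (dvdn_mulr m (dvdnn _))).
  rewrite expnSr dvdn_pmul2l ?expn_gt0 ?p_gt0 //.
  by rewrite (dvdn_prime2 p_pr q_pr) (negbTE p_neq_q).
exists None; split=> //=; first by rewrite -(dvdn_pmul2r q_gt0).
apply: contraL (coprime_pexp_q n) => /(dvdn_trans (dvdn_mull x (dvdnn q))) dv_q.
by rewrite coprime_sym prime_coprime // dv_q.
Qed.

End PrimePowerTimesPrime.

Section Cyclic.
Variable gT : finGroupType.
Local Open Scope group_scope.
Implicit Types (G H K : {group gT}).

Lemma cyclic_sub_of_order G d :
  cyclic G -> d %| #|G| -> exists2 H : {group gT}, H \subset G & #|H| = d.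
Proof.
case/cyclicP=> x -> dv_d; exists <[x ^+ (#[x] %/ d)]>%G; first exact: cycleX.
rewrite -orderE orderXdiv ?dvdn_div // divnA // mulKn //.
Qed.

Lemma cyclic_subgroups_of_orders (I : finType) G (d : I -> nat) :
    cyclic G -> (forall i, d i %| #|G|) ->
  exists X : I -> {group gT}, forall i, X i \subset G /\ #|X i| = d i.
Proof.
move=> cycG dv_d.
suff /fin_all_exists[X oX] : forall i, exists X : {group gT}, X \subset G /\ #|X| = d i.
  by exists X.
by move=> i; have [X sXG oX] := cyclic_sub_of_order cycG (dv_d i); exists X.
Qed.

Lemma abelian_maximal_prime_index H K : abelian K -> maximal H K -> prime #|K : H|.
Proof.
move=> abK maxH; apply: index_maxnormal_sol_prime (abelian_sol abK) _.
apply/maxgroupP; have [ltHK maxH'] := maxgroupP maxH.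
split=> [|N /andP[ltNK _]]; last exact: maxH'.
by rewrite ltHK sub_abelian_norm ?proper_sub.
Qed.

Section CyclicOrderPrimePowerTimesPrime.
Variables (G : {group gT}) (p q n : nat).
Hypotheses (p_pr : prime p) (q_pr : prime q) (p_neq_q : p != q).
Hypotheses (cycG : cyclic G) (oG : #|G| = (p ^ n * q)%N).
Variables A B : option 'I_n -> {group gT}.
Hypotheses (sAG : forall i, A i \subset G) (oA : forall i, #|A i| = cover_bot p q i).
Hypotheses (sBG : forall i, B i \subset G) (oB : forall i, #|B i| = cover_top p q i).

Lemma cover_maximal i : maximal (A i) (B i).
Proof.
have sAB : A i \subset B i.
  by rewrite -(cardSg_cyclic cycG (sAG i) (sBG i)) oA oB cover_topE dvdn_mulr.
apply: (p_index_maximal sAB); rewrite -(divgS sAB) oA oB cover_topE mulKn.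
  by case: i {sAB}.
by rewrite -oA cardG_gt0.
Qed.

Lemma cover_separated i j (X : {group gT}) :
    X \subset G -> A i \subset X -> A j \subset X -> ~~ (B i \subset X) -> ~~ (B j \subset X) ->
  i = j.
Proof.
move=> sXG; rewrite -!(cardSg_cyclic cycG _ sXG) ?sAG ?sBG // !oA !oB.
exact: cover_bot_sep.
Qed.

Lemma cover_dominating H K :
    K \subset G -> maximal H K ->
  exists i, [/\ H \subset A i, K \subset B i & ~~ (K \subset A i)].
Proof.
move=> sKG maxH; have sHK := proper_sub (maxgroupp maxH); have sHG := subset_trans sHK sKG.
have r_pr := abelian_maximal_prime_index (abelianS sKG (cyclic_abelian cycG)) maxH.
have oK : #|K| = (#|H| * #|K : H|)%N by rewrite Lagrange.
have dvKG : (#|H| * #|K : H| %| p ^ n * q)%N by rewrite -oK -oG cardSg.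
have [i [dv_src dv_tgt ndv_src]] := cover_dominates p_pr q_pr p_neq_q r_pr dvKG.
exists i; rewrite -(cardSg_cyclic cycG sHG (sAG i)) -(cardSg_cyclic cycG sKG (sBG i)).
by rewrite -(cardSg_cyclic cycG sKG (sAG i)) oA oB oK.
Qed.

End CyclicOrderPrimePowerTimesPrime.

End Cyclic.

Theorem lemma6p1 (gT : finGroupType) (G : {group gT}) (p q n : nat) :
  prime p -> prime q -> p != q -> 0 < n ->
  cyclic G -> #|G| = p ^ n * q ->
  (exists S, min_gen_set G S (complete_ts G)) /\
  (forall S, min_gen_set G S (complete_ts G) -> #|S| = n.+1).
Proof.
move=> p_pr q_pr p_neq_q _ cycG oG; have abG := cyclic_abelian cycG.
split=> [|S /(min_gen_setP abG) minS]; first exact: min_gen_set_exists.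
have dv_src i : @cover_bot p q n i %| #|G| by rewrite oG (cover_bot_dvd p_pr q_pr).
have dv_tgt i : @cover_top p q n i %| #|G| by rewrite oG (cover_top_dvd p_pr q_pr).
have [A /all_and2[sAG oA]] := cyclic_subgroups_of_orders cycG dv_src.
have [B /all_and2[sBG oB]] := cyclic_subgroups_of_orders cycG dv_tgt.
have maxAB := cover_maximal p_pr q_pr cycG sAG oA sBG oB.
have sepAB := cover_separated p_pr q_pr p_neq_q cycG sAG oA sBG oB.
have domAB := cover_dominating p_pr q_pr p_neq_q cycG oG sAG oA sBG oB.
by rewrite (card_minset_covering sBG maxAB sepAB domAB minS) card_option card_ord.
Qed.
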